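(* The QDP implementation of the Grover search using density matrix exponentiation generates a sequence of states $\rho_n\in\mathcal{S}_{\mathrm{rel}}$ for all $n\in\mathbb{N}$ whenever $\rho_0=\psi_0\in\mathcal{S}_{\mathrm{rel}}$.
   Context: $|\tau\rangle$ (target) and $|\psi_0\rangle$ (initial) are pure states, $\psi_0=|\psi_0\rangle\langle\psi_0|$; $\mathcal{H}_{\mathrm{rel}}=\mathrm{span}\{|\tau\rangle,|\tau^\perp\rangle\}$ with $|\tau^\perp\rangle\propto|\psi_0\rangle-\langle\tau|\psi_0\rangle|\tau\rangle$; $\mathcal{S}_{\mathrm{rel}}$ is the set of density matrices supported in $\mathcal{H}_{\mathrm{rel}}$. In the QDP implementation of the Grover search, each recursion step maps the current state $\rho_{n-1}$ to $\rho_n$ by a composition of (a) exact partial reflections about the target, $\sigma\mapsto E_s(\tau)\sigma E_s(\tau)^\dagger$ with $E_s(\tau)=\mathbf{1}-(1-e^{-is})|\tau\rangle\langle\tau|$, and (b) density matrix exponentiation channels $\hat E_s^{\rho_{n-1}}(\sigma)=\cos^2(s)\sigma-i\sin(s)\cos(s)[\rho_{n-1},\sigma]+\sin^2(s)\rho_{n-1}$ instructed by copies of $\rho_{n-1}$. *)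

From HB Require Import structures.
From mathcomp Require Import all_boot all_order all_algebra.
From mathcomp Require Import all_classical all_reals.
From mathcomp Require Import trigo.
From mathcomp Require Import complex.
Set Implicit Arguments. Unset Strict Implicit. Unset Printing Implicit Defensive.
Import Order.TTheory GRing.Theory Num.Theory.
Local Open Scope ring_scope.

Section QDP.
Variables (R : realType) (d : nat).
Local Notation C := (R[i]).

Definition adj m n (A : 'M[C]_(m, n)) : 'M[C]_(n, m) := (map_mx Num.conj A)^T.

Definition braket (u v : 'cV[C]_d) : C := (adj u *m v) ord0 ord0.

Definition unit_ket (v : 'cV[C]_d) : Prop := braket v v = 1.

Definition ketbra (u v : 'cV[C]_d) : 'M[C]_d := u *m adj v.

Definition density (rho : 'M[C]_d) : Prop :=
  [/\ adj rho = rho,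
      (forall v : 'cV[C]_d, 0 <= (adj v *m rho *m v) ord0 ord0)
    & \tr rho = 1].

(* |tau_perp> up to normalization: |psi0> - <tau|psi0>|tau> *)
Definition tau_perp (tau psi0 : 'cV[C]_d) : 'cV[C]_d :=
  psi0 - braket tau psi0 *: tau.

Definition in_Hrel (tau psi0 v : 'cV[C]_d) : Prop :=
  exists a b : C, v = a *: tau + b *: tau_perp tau psi0.

(* S_rel: density matrices supported in H_rel (range, i.e. every column, lies in H_rel) *)
Definition S_rel (tau psi0 : 'cV[C]_d) (rho : 'M[C]_d) : Prop :=
  density rho /\ forall j : 'I_d, in_Hrel tau psi0 (col j rho).

Definition expi (s : R) : C := Complex (cos s) (sin s).

Definition Erefl (s : R) (tau : 'cV[C]_d) : 'M[C]_d :=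
  1%:M - (1 - expi (- s)) *: ketbra tau tau.

Definition refl_channel (s : R) (tau : 'cV[C]_d) (sigma : 'M[C]_d) : 'M[C]_d :=
  Erefl s tau *m sigma *m adj (Erefl s tau).

Definition dme_channel (s : R) (rho sigma : 'M[C]_d) : 'M[C]_d :=
  ((cos s) ^+ 2)%:C%C *: sigma
  - (Complex 0 1 * (sin s * cos s)%:C%C) *: (rho *m sigma - sigma *m rho)
  + ((sin s) ^+ 2)%:C%C *: rho.

Inductive qdp_op := Refl of R | DME of R.

Definition apply_op (tau : 'cV[C]_d) (instr : 'M[C]_d) (o : qdp_op)
    (sigma : 'M[C]_d) : 'M[C]_d :=
  match o with
  | Refl s => refl_channel s tau sigma
  | DME s => dme_channel s instr sigma
  end.

(* apply the list of operations, first element first *)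
Definition apply_ops (tau : 'cV[C]_d) (instr : 'M[C]_d) (os : seq qdp_op)
    (sigma : 'M[C]_d) : 'M[C]_d :=
  foldl (fun acc o => apply_op tau instr o acc) sigma os.

(* QDP recursion: rho_0 = psi0, rho_n = (composition sched n)(rho_{n-1}),
   with all DME channels instructed by copies of rho_{n-1}. *)
Fixpoint qdp_state (tau psi0 : 'cV[C]_d) (sched : nat -> seq qdp_op) (n : nat)
    : 'M[C]_d :=
  match n with
  | 0 => ketbra psi0 psi0
  | k.+1 => let rho := qdp_state tau psi0 sched k in
            apply_ops tau rho (sched k.+1) rho
  end.

End QDP.

From HB Require Import structures.
From mathcomp Require Import all_boot all_order all_algebra.
From mathcomp Require Import all_classical all_reals.
From mathcomp Require Import trigo.
From mathcomp Require Import complex.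
From mathcomp Require Import ring.
Set Implicit Arguments. Unset Strict Implicit. Unset Printing Implicit Defensive.
Import Order.TTheory GRing.Theory Num.Theory.
Local Open Scope ring_scope.

(* Both halves of S_rel are invariant under each elementary operation, for any
   instructing state in S_rel.  Support: every output is a linear combination of
   matrices M B, with M the current or instructing state, and, for the reflection,
   of tau (tau^dagger M); so its columns stay in span{tau, tau_perp}.  Density: the
   reflection is a unitary conjugation.  For the DME channel, with
   K = cos s - i sin s rho, one has
     E_s^rho(sigma) = K sigma K^dagger + sin^2 s (rho - rho sigma rho),
   and rho sigma rho <= rho because a density matrix sigma satisfies
   <w|sigma|w> <= <w|w>, while <rho v|rho v> <= <v|rho|v>. *)

Lemma AGM2_le_of_sqr (R : numDomainType) (p a b : R) :
  0 <= p -> 0 <= a -> 0 <= b -> p ^+ 2 <= a * b -> p *+ 2 <= a + b.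
Proof.
move=> p_ge0 a_ge0 b_ge0 pab.
rewrite -ler_sqr ?nnegrE ?addr_ge0 ?mulrn_wge0 // exprMn_n.
apply: le_trans (real_leif_AGM2_scaled (ger0_real a_ge0) (ger0_real b_ge0)).
by rewrite lerMn2r.
Qed.

Section Adjoint.
Variable R : realType.
Local Notation C := R[i].

Lemma adjK m n (A : 'M[C]_(m, n)) : adj (adj A) = A.
Proof. by rewrite /adj map_trmx trmxK -map_mx_comp map_mx_id // => x /=; rewrite conjCK. Qed.

Lemma adjM m n p (A : 'M[C]_(m, n)) (B : 'M[C]_(n, p)) :
  adj (A *m B) = adj B *m adj A.
Proof. by rewrite /adj map_mxM trmx_mul. Qed.

Lemma adjD m n (A B : 'M[C]_(m, n)) : adj (A + B) = adj A + adj B.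
Proof. by rewrite /adj map_mxD linearD. Qed.

Lemma adjB m n (A B : 'M[C]_(m, n)) : adj (A - B) = adj A - adj B.
Proof. by rewrite /adj map_mxB linearB. Qed.

Lemma adjZ m n a (A : 'M[C]_(m, n)) : adj (a *: A) = a^* *: adj A.
Proof. by rewrite /adj map_mxZ linearZ. Qed.

Lemma adj1 n : adj (1%:M : 'M[C]_n) = 1%:M.
Proof. by rewrite /adj map_mx1 trmx1. Qed.

Lemma adj_delta m n i j : adj (delta_mx i j : 'M[C]_(m, n)) = delta_mx j i.
Proof. by rewrite /adj (map_delta_mx Num.conj) trmx_delta. Qed.

Lemma conjC_real (r : R) : (r%:C%C : C)^* = r%:C%C.
Proof. by apply: conj_Creal; apply/complex_realP; exists r. Qed.

Lemma adj_mx11 (A : 'M[C]_1) : adj A ord0 ord0 = (A ord0 ord0)^*.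
Proof. by rewrite /adj !mxE. Qed.

End Adjoint.

Section DensityMatrices.
Variables (R : realType) (d : nat).
Local Notation C := R[i].
Implicit Types (s : R) (A B rho sigma : 'M[C]_d) (x y v tau : 'cV[C]_d).

Definition mxform A x y : C := (adj x *m A *m y) ord0 ord0.

Definition psdmx A : Prop := forall v, 0 <= mxform A v v.

Lemma mxformDmx A B x y : mxform (A + B) x y = mxform A x y + mxform B x y.
Proof. by rewrite /mxform mulmxDr mulmxDl mxE. Qed.

Lemma mxformBmx A B x y : mxform (A - B) x y = mxform A x y - mxform B x y.
Proof. by rewrite mxformDmx /mxform mulmxN mulNmx [X in _ + X]mxE. Qed.

Lemma mxformZmx a A x y : mxform (a *: A) x y = a * mxform A x y.
Proof. by rewrite /mxform -scalemxAr -scalemxAl mxE. Qed.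

Lemma mxformDl A x y z : mxform A (x + y) z = mxform A x z + mxform A y z.
Proof. by rewrite /mxform adjD !mulmxDl mxE. Qed.

Lemma mxformDr A x y z : mxform A z (x + y) = mxform A z x + mxform A z y.
Proof. by rewrite /mxform mulmxDr mxE. Qed.

Lemma mxformZl A a x y : mxform A (a *: x) y = a^* * mxform A x y.
Proof. by rewrite /mxform adjZ -!scalemxAl mxE. Qed.

Lemma mxformZr A a x y : mxform A x (a *: y) = a * mxform A x y.
Proof. by rewrite /mxform -scalemxAr mxE. Qed.

Lemma mxform_congr A B x y :
  mxform (B *m A *m adj B) x y = mxform A (adj B *m x) (adj B *m y).
Proof. by rewrite /mxform adjM adjK !mulmxA. Qed.

Lemma mxform_conj A x y : adj A = A -> (mxform A x y)^* = mxform A y x.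
Proof. by move=> hA; rewrite /mxform -adj_mx11 !adjM adjK hA mulmxA. Qed.

Lemma mxform_lincomb A a b x y :
  mxform A (a *: x + b *: y) (a *: x + b *: y) =
  a^* * a * mxform A x x + a^* * b * mxform A x y
  + b^* * a * mxform A y x + b^* * b * mxform A y y.
Proof. by rewrite mxformDl !mxformDr !mxformZl !mxformZr; ring. Qed.

Lemma mxform_sum A x : mxform A x x = \sum_j (adj x *m A) ord0 j * x j ord0.
Proof. by rewrite /mxform mxE. Qed.

Lemma mxform1 x : mxform 1%:M x x = \sum_j `|x j ord0| ^+ 2.
Proof.
by rewrite /mxform mulmx1 mxE; apply: eq_bigr => j _; rewrite normCKC /adj !mxE.
Qed.

Lemma mxform_deltar A x j : mxform A x (delta_mx j ord0) = (adj x *m A) ord0 j.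
Proof. by rewrite /mxform -colE mxE. Qed.

Lemma mxform_delta A j : mxform A (delta_mx j ord0) (delta_mx j ord0) = A j j.
Proof. by rewrite mxform_deltar adj_delta -rowE mxE. Qed.

Lemma psdmx1 : psdmx 1%:M.
Proof. by move=> v; rewrite mxform1; apply: sumr_ge0 => j _; rewrite exprn_ge0. Qed.

Lemma psdmxD A B : psdmx A -> psdmx B -> psdmx (A + B).
Proof. by move=> hA hB v; rewrite mxformDmx addr_ge0. Qed.

Lemma psdmxZ a A : 0 <= a -> psdmx A -> psdmx (a *: A).
Proof. by move=> a_ge0 hA v; rewrite mxformZmx mulr_ge0. Qed.

Lemma psdmx_congr A B : psdmx A -> psdmx (B *m A *m adj B).
Proof. by move=> hA v; rewrite mxform_congr. Qed.

Lemma mxform_cauchy_schwarz A x y : adj A = A -> psdmx A ->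
  `|mxform A x y| ^+ 2 <= mxform A x x * mxform A y y.
Proof.
move=> hA psdA.
have sym u w : mxform A u w = (mxform A w u)^* by rewrite mxform_conj.
have pos u w : 0 < mxform A w w -> `|mxform A u w| ^+ 2 <= mxform A u u * mxform A w w.
  move=> w_gt0; set b := mxform A w w; set g := mxform A w u.
  have b_real : b^* = b by apply/conj_Creal/gtr0_real.
  have := psdA (b *: u + (- g) *: w).
  rewrite mxform_lincomb [mxform A u w]sym -/g b_real rmorphN.
  have -> : b * b * mxform A u u + b * - g * g^* + - g^* * b * g + - g^* * - g * b
     = b * (mxform A u u * b - g * g^*) by ring.
  by rewrite pmulr_rge0 // subr_ge0 norm_conjC normCK.
have [y0|] := eqVneq (mxform A y y) 0; last first.
  by move=> y_neq0; apply: pos; rewrite lt_def y_neq0 psdA.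
have [x0|x_neq0] := eqVneq (mxform A x x) 0; last first.
  have := pos y x; rewrite lt_def x_neq0 psdA => /(_ isT).
  by rewrite -norm_conjC -sym mulrC.
set g := mxform A y x.
have := psdA (1 *: x + (- g) *: y).
rewrite mxform_lincomb [mxform A x y]sym -/g x0 y0 rmorphN conjC1.
have -> : 1 * 1 * 0 + 1 * - g * g^* + - g^* * 1 * g + - g^* * - g * 0
    = - (`|g| ^+ 2 *+ 2) by rewrite normCK; ring.
by rewrite oppr_ge0 pmulrn_lle0 // norm_conjC mulr0.
Qed.

Lemma density_mxform_le A x : density A -> mxform A x x <= mxform 1%:M x x.
Proof.
(* With t := <x|A|x> = \sum_j (x^dagger A)_j x_j, Cauchy-Schwarz gives
   |(x^dagger A)_j|^2 <= t A_jj; AM-GM and \tr A = 1 then yield 2 t <= t + <x|x>. *)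
case=> hA psdA trA; set t := mxform A x x.
have t_ge0 : 0 <= t := psdA x.
have term_le j : (`|(adj x *m A) ord0 j| * `|x j ord0|) *+ 2 <= t * A j j + `|x j ord0| ^+ 2.
  apply: AGM2_le_of_sqr; rewrite ?mulr_ge0 ?exprn_ge0 //.
    by rewrite -mxform_delta; apply: psdA.
  rewrite exprMn ler_wpM2r ?exprn_ge0 // -mxform_delta -mxform_deltar.
  exact: mxform_cauchy_schwarz.
suff : t *+ 2 <= t + mxform 1%:M x x by rewrite mulr2n lerD2l.
have -> : t + mxform 1%:M x x = \sum_j (t * A j j + `|x j ord0| ^+ 2).
  by rewrite big_split /= -mulr_sumr -/(\tr A) trA mulr1 mxform1.
apply: le_trans (ler_sum _ (fun j _ => term_le j)).
rewrite sumrMnl lerMn2r /= -{1}(ger0_norm t_ge0) /t mxform_sum.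
by apply: le_trans (ler_norm_sum _ _ _) _; apply: ler_sum => j _; rewrite normrM.
Qed.

Lemma density_mxform_sqr_le A v :
  density A -> mxform 1%:M (A *m v) (A *m v) <= mxform A v v.
Proof.
move=> densA; have [hA psdA _] := densA.
set n := mxform 1%:M (A *m v) (A *m v).
have n_ge0 : 0 <= n := psdmx1 _.
have nE : n = mxform A v (A *m v) by rewrite /n /mxform adjM hA mulmx1 !mulmxA.
have : n ^+ 2 <= mxform A v v * n.
  rewrite -[n in n ^+ 2]ger0_norm // {1}nE.
  apply: le_trans (mxform_cauchy_schwarz _ _ hA psdA) _.
  by rewrite ler_wpM2l ?density_mxform_le //; apply: psdA.
have [->|n_neq0] := eqVneq n 0; first by rewrite psdA.
by rewrite expr2 ler_pM2r // lt_def n_neq0.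
Qed.

Lemma hermitian_congr A B : adj A = A -> adj (B *m A *m adj B) = B *m A *m adj B.
Proof. by move=> hA; rewrite !adjM adjK hA mulmxA. Qed.

Lemma unit_ketE v : unit_ket v -> adj v *m v = 1%:M.
Proof. by move=> hv; apply/matrixP => i j; rewrite !ord1 -[LHS]/(braket v v) hv mxE. Qed.

Lemma expi_unit (t : R) : (expi t)^* * expi t = 1.
Proof. by rewrite -normCKC -add_Re2_Im2 /= cos2Dsin2. Qed.

Lemma Erefl_unitary s tau : unit_ket tau -> adj (Erefl s tau) *m Erefl s tau = 1%:M.
Proof.
move=> unit_tau; rewrite /Erefl; set k := 1 - expi (- s); set P := ketbra tau tau.
have adjP : adj P = P by rewrite /P /ketbra adjM adjK.
have PP : P *m P = P by rewrite /P /ketbra mulmxA -(mulmxA tau) unit_ketE // mulmx1.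
have kk : k^* * k = k + k^*.
  have := expi_unit (- s); rewrite /k rmorphB rmorph1 => e.
  by rewrite mulrBl !mulrBr e; ring.
rewrite adjB adj1 adjZ adjP mulmxBl mul1mx !mulmxBr mulmx1 -!scalemxAl -!scalemxAr PP.
rewrite scalerA kk [(k + _) *: _]scalerDl [k *: P + _]addrC [- (_ + k *: P)]opprD.
by rewrite addNKr opprK subrK.
Qed.

Lemma density_refl s tau sigma :
  unit_ket tau -> density sigma -> density (refl_channel s tau sigma).
Proof.
move=> unit_tau [hs psds trs]; split.
- exact: hermitian_congr.
- exact: psdmx_congr.
- by rewrite mxtrace_mulC mulmxA Erefl_unitary // mul1mx.
Qed.

Definition dme_kraus s rho : 'M[C]_d :=
  (cos s)%:C%C *: 1%:M - ('i%C * (sin s)%:C%C) *: rho.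

Lemma conj_i_real (r : R) : ('i%C * r%:C%C : C)^* = - ('i%C * r%:C%C).
Proof. by apply/eqP; rewrite eq_complex /= !mul0r !mul1r !subr0 add0r oppr0 !eqxx. Qed.

Lemma dme_channelE s rho sigma : adj rho = rho ->
  dme_channel s rho sigma = dme_kraus s rho *m sigma *m adj (dme_kraus s rho)
                            + ((sin s) ^+ 2)%:C%C *: (rho - rho *m sigma *m rho).
Proof.
move=> hrho; rewrite /dme_channel /dme_kraus adjB !adjZ adj1 hrho conj_i_real conjC_real.
rewrite !(mulmxBl, mulmxBr) -!scalemxAl -!scalemxAr mul1mx !mulmx1 !scalerA.
rewrite !mulrN -!expr2 exprMn sqr_i !rmorphXn rmorphM /=.
set X := rho *m sigma; set Y := sigma *m rho; set Z := X *m rho.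
by apply/matrixP => i j; rewrite !mxE; ring.
Qed.

Lemma psdmx_sub_sandwich rho sigma :
  density rho -> density sigma -> psdmx (rho - rho *m sigma *m rho).
Proof.
move=> densr denss v; have [hr _ _] := densr.
rewrite mxformBmx -{3}hr mxform_congr hr subr_ge0.
apply: le_trans (density_mxform_sqr_le _ densr).
exact: density_mxform_le.
Qed.

Lemma mxtrace_dme s rho sigma :
  \tr rho = 1 -> \tr sigma = 1 -> \tr (dme_channel s rho sigma) = 1.
Proof.
move=> trr trs; rewrite /dme_channel !mxtraceD -scaleNr !mxtraceZ.
rewrite [\tr (_ - _)]raddfB /= mxtrace_mulC subrr.
by rewrite trr trs mulr0 addr0 !mulr1 -rmorphD cos2Dsin2.
Qed.

Lemma density_dme s rho sigma :
  density rho -> density sigma -> density (dme_channel s rho sigma).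
Proof.
move=> densr denss; have [hr _ trr] := densr; have [hs psds trs] := denss.
rewrite dme_channelE //; split.
- rewrite adjD adjZ conjC_real (hermitian_congr _ hs); congr (_ + _ *: _).
  by rewrite adjB !adjM hr hs mulmxA.
- apply: psdmxD; first exact: psdmx_congr.
  by apply: psdmxZ; [rewrite lecR sqr_ge0 | exact: psdmx_sub_sandwich].
- by rewrite -dme_channelE // mxtrace_dme.
Qed.

End DensityMatrices.

Section Support.
Variables (R : realType) (d : nat) (tau psi0 : 'cV[R[i]]_d).
Local Notation C := R[i].
Local Notation in_H := (in_Hrel tau psi0).

Definition Hrel_supported n (A : 'M[C]_(d, n)) : Prop := forall j, in_H (col j A).

Lemma in_Hrel0 : in_H 0.
Proof. by exists 0, 0; rewrite !scale0r addr0. Qed.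

Lemma in_HrelD u v : in_H u -> in_H v -> in_H (u + v).
Proof.
by move=> [a1 [b1 ->]] [a2 [b2 ->]]; exists (a1 + a2), (b1 + b2); rewrite !scalerDl addrACA.
Qed.

Lemma in_HrelZ a u : in_H u -> in_H (a *: u).
Proof. by move=> [b [c ->]]; exists (a * b), (a * c); rewrite scalerDr !scalerA. Qed.

Lemma in_Hrel_mulmx n (A : 'M[C]_(d, n)) w : Hrel_supported A -> in_H (A *m w).
Proof.
move=> suppA; have -> : A *m w = \sum_k w k ord0 *: col k A.
  apply/matrixP => i j; rewrite !mxE summxE; apply: eq_bigr => k _.
  by rewrite !mxE !ord1 mulrC.
by apply: big_ind => [|u v|k _]; [exact: in_Hrel0 | exact: in_HrelD | exact: in_HrelZ].
Qed.

Lemma Hrel_supported_mulmx n p (A : 'M[C]_(d, n)) (B : 'M[C]_(n, p)) :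
  Hrel_supported A -> Hrel_supported (A *m B).
Proof. by move=> suppA j; rewrite colE -mulmxA; apply: in_Hrel_mulmx. Qed.

Lemma Hrel_supportedD n (A B : 'M[C]_(d, n)) :
  Hrel_supported A -> Hrel_supported B -> Hrel_supported (A + B).
Proof. by move=> suppA suppB j; rewrite colE mulmxDl -!colE; apply: in_HrelD. Qed.

Lemma Hrel_supportedZ n a (A : 'M[C]_(d, n)) :
  Hrel_supported A -> Hrel_supported (a *: A).
Proof. by move=> suppA j; rewrite colE -scalemxAl -colE; apply: in_HrelZ. Qed.

Lemma Hrel_supportedB n (A B : 'M[C]_(d, n)) :
  Hrel_supported A -> Hrel_supported B -> Hrel_supported (A - B).
Proof.
by move=> suppA suppB; rewrite -scaleN1r; apply: Hrel_supportedD => //; apply: Hrel_supportedZ.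
Qed.

Lemma Hrel_supported_tau : Hrel_supported tau.
Proof. by move=> j; rewrite col_id; exists 1, 0; rewrite scale1r scale0r addr0. Qed.

Lemma Hrel_supported_refl s sigma :
  Hrel_supported sigma -> Hrel_supported (refl_channel s tau sigma).
Proof.
move=> supps; rewrite /refl_channel /Erefl -mulmxA mulmxBl mul1mx -scalemxAl /ketbra -mulmxA.
apply: Hrel_supportedB; first exact: Hrel_supported_mulmx.
by apply/Hrel_supportedZ/Hrel_supported_mulmx/Hrel_supported_tau.
Qed.

Lemma Hrel_supported_dme s rho sigma :
  Hrel_supported rho -> Hrel_supported sigma -> Hrel_supported (dme_channel s rho sigma).
Proof.
move=> suppr supps; rewrite /dme_channel.
apply: Hrel_supportedD; last exact: Hrel_supportedZ.
apply: Hrel_supportedB; first exact: Hrel_supportedZ.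
by apply/Hrel_supportedZ/Hrel_supportedB; apply: Hrel_supported_mulmx.
Qed.

Lemma S_rel_apply_op o rho sigma : unit_ket tau ->
  S_rel tau psi0 rho -> S_rel tau psi0 sigma -> S_rel tau psi0 (apply_op tau rho o sigma).
Proof.
move=> unit_tau [densr suppr] [denss supps]; case: o => s; split.
- exact: density_refl.
- exact: Hrel_supported_refl.
- exact: density_dme.
- exact: Hrel_supported_dme.
Qed.

Lemma S_rel_apply_ops os rho sigma : unit_ket tau ->
  S_rel tau psi0 rho -> S_rel tau psi0 sigma -> S_rel tau psi0 (apply_ops tau rho os sigma).
Proof.
move=> unit_tau Srho; elim: os sigma => [|o os IH] sigma Ssigma //=.
by apply: IH; apply: S_rel_apply_op.
Qed.

End Support.

Theorem corollary1 (R : realType) (d : nat) (tau psi0 : 'cV[R[i]]_d)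
  (sched : nat -> seq (qdp_op R)) :
  unit_ket tau -> unit_ket psi0 ->
  S_rel tau psi0 (ketbra psi0 psi0) ->
  forall n : nat, S_rel tau psi0 (qdp_state tau psi0 sched n).
Proof.
move=> unit_tau _ S0; elim=> [|n IH] //=.
exact: S_rel_apply_ops.
Qed.
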